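(* For all (possibly partial) Boolean functions $f$ and $g$, $\lambda(f\circ g)=\lambda(f)\lambda(g)$.
   Context: For a partial function $h$ with domain $\mathrm{Dom}(h)\subseteq\{0,1\}^k$, the sensitivity graph $G_h$ has vertex set $\mathrm{Dom}(h)$ and an edge between $x,y$ iff they differ in exactly one coordinate and $h(x)\ne h(y)$; $\lambda(h)$ is the spectral norm of its adjacency matrix. If $f$ has $n$ input bits and $g$ has $m$, then $f\circ g$ is the partial function on $\{0,1\}^{nm}$, with input written $x=x^{(1)}\cdots x^{(n)}$, $x^{(i)}\in\{0,1\}^m$, defined on those $x$ with each $x^{(i)}\in\mathrm{Dom}(g)$ and $(g(x^{(1)}),\dots,g(x^{(n)}))\in\mathrm{Dom}(f)$, by $(f\circ g)(x)=f(g(x^{(1)}),\dots,g(x^{(n)}))$. *)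

From HB Require Import structures.
From mathcomp Require Import all_boot all_order all_algebra.
From mathcomp Require Import boolp classical_sets reals.
Set Implicit Arguments. Unset Strict Implicit. Unset Printing Implicit Defensive.
Import Order.TTheory GRing.Theory Num.Theory.
Local Open Scope ring_scope.
Local Open Scope classical_set_scope.

Definition bits (k : nat) := {ffun 'I_k -> bool}.

(* A partial Boolean function on k bits: None = outside Dom(h). *)
Definition pfun (k : nat) := bits k -> option bool.

Definition dom (k : nat) (h : pfun k) : pred (bits k) := fun x => h x != None.

Definition domT (k : nat) (h : pfun k) := {x : bits k | dom h x}.

Definition hamming1 (k : nat) (x y : bits k) : bool :=
  #|[set i | x i != y i]| == 1%N.

(* Adjacency matrix of the sensitivity graph G_h, indexed by Dom(h). *)
Definition sens_adj (R : realType) (k : nat) (h : pfun k)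
  (x y : domT h) : R :=
  if hamming1 (val x) (val y) && (h (val x) != h (val y)) then 1 else 0.

Definition spectral_norm (R : realType) (V : finType) (A : V -> V -> R) : R :=
  sup [set r : R | exists v : V -> R,
        (\sum_(i : V) v i ^+ 2 <= 1) /\
        r = Num.sqrt (\sum_(i : V) (\sum_(j : V) A i j * v j) ^+ 2)].

Definition lambda (R : realType) (k : nat) (h : pfun k) : R :=
  spectral_norm (@sens_adj R k h).

(* Block i of an input x of length n*m: x^(i)_j = x_{i*m + j}. *)
Definition block (n m : nat) (x : bits (n * m)) (i : 'I_n) : bits m :=
  [ffun j : 'I_m => x (mxvec_index i j)].

(* Composition f o g, defined exactly when every block is in Dom(g) and the
   vector of g-values is in Dom(f). *)
Definition compose (n m : nat) (f : pfun n) (g : pfun m) : pfun (n * m) :=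
  fun x =>
    let ys := [ffun i : 'I_n => g (block x i)] in
    if [forall i, ys i != None]
    then f [ffun i => odflt false (ys i)]
    else None.

(* Throughout, lambda(h) is handled through the bilinear form <W, A U> of the
   adjacency matrix A_h extended by zero to the whole cube: lambda(h) is the
   least c >= 0 with <W, A_h U> <= c |W| |U|.  An input of f o g is viewed as
   n blocks of m bits; two inputs are adjacent in G_(f o g) iff they differ in
   a single block i, these blocks are adjacent in G_g, and the vectors z, z'
   of g-values of the blocks are adjacent in G_f (so they differ only at i).

   - Upper bound: split the form of A_(f o g) along the fibres over each
     g-value vector z.  The part carried by an edge z ~ z' of G_f decomposes
     over the common "frame" of the other n-1 blocks into forms of A_g, hence
     is at most lambda(g) times the norms of the two fibres (Cauchy–Schwarz);
     the fibre norms then feed the form of A_f, bounded by lambda(f).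
   - Lower bound: G_g is bipartite between g^-1(false) and g^-1(true), so
     lambda(g) is approached by <u, A_g v> with unit u, v on the two sides.
     Lifting a vector a on {0,1}^n to sum_z a_z (tensor_i phi_(z_i)), with
     phi_false = u and phi_true = v, is an isometry multiplying the form of
     A_f by <u, A_g v>. *)

From HB Require Import structures.
From mathcomp Require Import all_boot all_order all_algebra.
From mathcomp Require Import boolp classical_sets reals.
From mathcomp Require Import ring lra.
Set Implicit Arguments. Unset Strict Implicit. Unset Printing Implicit Defensive.
Import Order.TTheory GRing.Theory Num.Theory.
Local Open Scope ring_scope.

Section BigSums.
Variable R : comNzRingType.

Lemma sum_indicator (T : finType) (a : T) (G : T -> R) :
  \sum_z (z == a)%:R * G z = G a.
Proof.
rewrite (bigD1 a) //= eqxx mul1r big1 ?addr0 // => z /negbTE ->.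
by rewrite mul0r.
Qed.

Lemma natr_bool_idem (b : bool) : (b%:R : R) * b%:R = b%:R.
Proof. by case: b; rewrite ?mulr1 ?mulr0. Qed.

Lemma sqr_sum_orthogonal (I : finType) (t : I -> R) :
  (forall a b, a != b -> t a * t b = 0) -> (\sum_a t a) ^+ 2 = \sum_a t a ^+ 2.
Proof.
move=> orth; rewrite expr2 big_distrl /=; apply: eq_bigr => a _.
rewrite big_distrr /= (bigD1 a) //= big1 ?addr0 ?expr2 // => b ba.
by apply: orth; rewrite eq_sym.
Qed.

Lemma exchange_big_pairs (A B C D : finType) (F : A -> B -> C -> D -> R) :
  \sum_a \sum_b \sum_c \sum_d F a b c d = \sum_c \sum_d \sum_a \sum_b F a b c d.
Proof.
transitivity (\sum_a \sum_c \sum_d \sum_b F a b c d).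
  apply: eq_bigr => a _; rewrite exchange_big /=; apply: eq_bigr => c _.
  by rewrite exchange_big.
by rewrite exchange_big /=; apply: eq_bigr => c _; rewrite exchange_big.
Qed.

End BigSums.

Section EuclideanForms.
Variables (R : realType) (V : finType).
Implicit Types (u v w : V -> R) (A : V -> V -> R).

Definition sqnorm v : R := \sum_i v i ^+ 2.
Definition norm2 v : R := Num.sqrt (sqnorm v).

Lemma sqnorm_ge0 v : 0 <= sqnorm v.
Proof. by apply: sumr_ge0 => i _; rewrite sqr_ge0. Qed.

Lemma norm2_ge0 v : 0 <= norm2 v.
Proof. exact: sqrtr_ge0. Qed.

(* Cauchy–Schwarz, from Lagrange's identity
   sum_(i,j) (u_i v_j - u_j v_i)^2 = 2 (|u|^2 |v|^2 - <u,v>^2). *)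
Lemma cauchy_schwarz_sqr u v : (\sum_i u i * v i) ^+ 2 <= sqnorm u * sqnorm v.
Proof.
have dsum (a b : V -> R) : \sum_i \sum_j a i * b j = (\sum_i a i) * (\sum_j b j).
  by rewrite big_distrl; apply: eq_bigr => i _; rewrite big_distrr.
have lagrange : \sum_i \sum_j (u i * v j - u j * v i) ^+ 2 =
    \sum_i \sum_j u i ^+ 2 * v j ^+ 2 + \sum_i \sum_j u j ^+ 2 * v i ^+ 2
    - (\sum_i \sum_j (u i * v i) * (u j * v j)) *+ 2.
  rewrite -big_split -sumrMnl -sumrB /=; apply: eq_bigr => i _.
  rewrite -big_split -sumrMnl -sumrB /=; apply: eq_bigr => j _; ring.
have : 0 <= \sum_i \sum_j (u i * v j - u j * v i) ^+ 2.
  by do 2![apply: sumr_ge0 => ? _]; apply: sqr_ge0.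
rewrite lagrange (exchange_big _ _ _ _ _ (fun i j => u j ^+ 2 * v i ^+ 2)) /=.
by rewrite !dsum -expr2 subr_ge0 -mulr2n lerMn2r.
Qed.

Lemma cauchy_schwarz u v : \sum_i u i * v i <= norm2 u * norm2 v.
Proof.
rewrite /norm2 -sqrtrM ?sqnorm_ge0 //; apply: le_trans (ler_norm _) _.
by rewrite -sqrtr_sqr ler_sqrt ?cauchy_schwarz_sqr // mulr_ge0 ?sqnorm_ge0.
Qed.

Lemma norm2Z a v : norm2 (fun i => a * v i) = `|a| * norm2 v.
Proof.
rewrite /norm2 /sqnorm -sqrtr_sqr -sqrtrM ?sqr_ge0 // big_distrr /=.
by congr Num.sqrt; apply: eq_bigr => i _; rewrite exprMn.
Qed.

Lemma norm2_eq0 v : norm2 v = 0 -> forall i, v i = 0.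
Proof.
move=> v0 i; apply/eqP; rewrite -sqrf_eq0; apply/eqP.
apply: (psumr_eq0P (P := xpredT) (fun j _ => sqr_ge0 (v j))) => //.
apply/eqP; rewrite eq_le -/(sqnorm v) sqnorm_ge0 andbT -sqrtr_eq0.
by rewrite -/(norm2 v) v0.
Qed.

Lemma sqnorm_normalize v : norm2 v != 0 -> sqnorm (fun i => (norm2 v)^-1 * v i) = 1.
Proof.
move=> nz; rewrite -[sqnorm _]sqr_sqrtr ?sqnorm_ge0 // -/(norm2 _) norm2Z.
by rewrite ger0_norm ?invr_ge0 ?norm2_ge0 // mulVf ?expr1n.
Qed.

Definition mxact A v : V -> R := fun i => \sum_j A i j * v j.
Definition form A w v : R := \sum_i w i * mxact A v i.

Lemma mxactZ A a v : mxact A (fun j => a * v j) = (fun i => a * mxact A v i).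
Proof.
apply: funext => i; rewrite /mxact big_distrr /=.
by apply: eq_bigr => j _; rewrite mulrCA.
Qed.

Lemma formZ A a b u v :
  form A (fun i => a * u i) (fun j => b * v j) = a * b * form A u v.
Proof.
rewrite /form mxactZ mulr_sumr; apply: eq_bigr => i _; ring.
Qed.

Lemma form_sym A u v : (forall x y, A x y = A y x) -> form A u v = form A v u.
Proof.
move=> Asym; rewrite /form /mxact.
under eq_bigr => i _ do rewrite mulr_sumr.
under [RHS]eq_bigr => i _ do rewrite mulr_sumr.
rewrite exchange_big /=; apply: eq_bigr => j _; apply: eq_bigr => i _.
rewrite Asym; ring.
Qed.

Definition unit_ball_image A : set R :=
  [set r | exists v, sqnorm v <= 1 /\ r = norm2 (mxact A v)].

Lemma unit_ball_image0 A : unit_ball_image A 0.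
Proof.
exists (fun _ => 0); split; first by rewrite /sqnorm big1 // => i _; rewrite expr0n.
rewrite /norm2 /sqnorm big1 ?sqrtr0 // => i _.
by rewrite /mxact big1 ?expr0n // => j _; rewrite mulr0.
Qed.

Lemma has_sup_unit_ball_image A : has_sup (unit_ball_image A).
Proof.
split; first by exists 0; apply: unit_ball_image0.
exists (Num.sqrt (\sum_i sqnorm (A i))) => r [v [v1 ->]].
rewrite ler_sqrt; last by apply: sumr_ge0 => i _; apply: sqnorm_ge0.
apply: ler_sum => i _; apply: le_trans (cauchy_schwarz_sqr (A i) v) _.
by rewrite -[leRHS]mulr1 ler_wpM2l ?sqnorm_ge0.
Qed.

Lemma spectral_normE A : spectral_norm A = sup (unit_ball_image A).
Proof. by []. Qed.

Lemma spectral_norm_ge0 A : 0 <= spectral_norm A.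
Proof.
rewrite spectral_normE.
exact: (sup_upper_bound (has_sup_unit_ball_image A)) (unit_ball_image0 A).
Qed.

Lemma norm2_mxact_le A v : norm2 (mxact A v) <= spectral_norm A * norm2 v.
Proof.
have [v0|nz] := eqVneq (norm2 v) 0.
  have zero_v := norm2_eq0 v0.
  rewrite v0 mulr0 (_ : mxact A v = mxact A (fun j => 0 * v j)).
    by rewrite mxactZ norm2Z normr0 mul0r.
  by apply: funext => i; apply: eq_bigr => j _; rewrite zero_v mul0r.
have vpos : 0 < norm2 v by rewrite lt_def nz norm2_ge0.
have unit : sqnorm (fun j => (norm2 v)^-1 * v j) <= 1 by rewrite sqnorm_normalize.
have := (sup_upper_bound (has_sup_unit_ball_image A)) _ (ex_intro _ _ (conj unit erefl)).
rewrite -spectral_normE mxactZ norm2Z ger0_norm ?invr_ge0 ?norm2_ge0 // mulrC.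
by rewrite -ler_pdivlMr ?invr_gt0 // invrK.
Qed.

Lemma form_le A w v : form A w v <= spectral_norm A * norm2 w * norm2 v.
Proof.
apply: le_trans (cauchy_schwarz _ _) _.
by rewrite -mulrA mulrCA ler_wpM2l ?norm2_ge0 ?norm2_mxact_le.
Qed.

(* ... and is the least constant doing so: test the form on w = A v. *)
Lemma spectral_norm_le A c : 0 <= c ->
  (forall w v, form A w v <= c * norm2 w * norm2 v) -> spectral_norm A <= c.
Proof.
move=> c0 bound; rewrite spectral_normE.
apply: ge_sup; first by exists 0; apply: unit_ball_image0.
move=> _ [v [v1 ->]]; set a := norm2 (mxact A v).
have a0 : 0 <= a by apply: norm2_ge0.
have v1' : norm2 v <= 1 by rewrite -sqrtr1 ler_sqrt.
have form_sqr : form A (mxact A v) v = a ^+ 2.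
  by rewrite sqr_sqrtr ?sqnorm_ge0 //; apply: eq_bigr => i _; rewrite expr2.
have : a ^+ 2 <= c * a.
  rewrite -form_sqr; apply: le_trans (bound _ _) _.
  by rewrite -[leRHS]mulr1 ler_wpM2l ?mulr_ge0.
have [->|nz] := eqVneq a 0; first by [].
by rewrite expr2 ler_pM2r // lt_def nz.
Qed.

End EuclideanForms.

Lemma hamming1E k (x y : bits k) : hamming1 x y = (#|[set i | x i != y i]| == 1)%N.
Proof.
rewrite /hamming1; congr (_ == _); apply: eq_card => i.
by apply/idP/idP; rewrite in_setE inE.
Qed.

Lemma hamming1_sym k (x y : bits k) : hamming1 x y = hamming1 y x.
Proof.
rewrite !hamming1E; suff -> : [set i | x i != y i] = [set i | y i != x i] by [].
by apply/setP => i; rewrite !inE eq_sym.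
Qed.

Lemma hamming1P k (x y : bits k) : hamming1 x y ->
  exists i, x i != y i /\ forall j, j != i -> y j = x j.
Proof.
rewrite hamming1E => /cards1P [i diff]; exists i; split.
  by have := set11 i; rewrite -diff inE.
move=> j ji; apply/eqP; have : j \notin [set j | x j != y j] by rewrite diff inE.
by rewrite inE negbK eq_sym.
Qed.

Section CubeAdjacency.
Variables (R : realType) (k : nat) (h : pfun k).
Implicit Types (W U : bits k -> R) (w : domT h -> R).

(* The adjacency matrix of G_h extended by zero to the whole cube {0,1}^k;
   working on the cube avoids the dependent vertex type domT h. *)
Definition cube_adj (x y : bits k) : R :=
  if dom h x && dom h y && hamming1 x y && (h x != h y) then 1 else 0.

Lemma cube_adj_sym x y : cube_adj x y = cube_adj y x.
Proof. by rewrite /cube_adj hamming1_sym [h x == _]eq_sym [dom h x && _]andbC. Qed.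

Lemma cube_adjP x y : cube_adj x y = 0 \/ cube_adj x y = 1 /\ hamming1 x y.
Proof. by rewrite /cube_adj; case: ifP => [/andP [/andP [_ ->] _]|_]; [right|left]. Qed.

Lemma sum_domT (F : bits k -> R) :
  (forall x, ~~ dom h x -> F x = 0) -> \sum_x F x = \sum_(x : domT h) F (val x).
Proof.
move=> out0; rewrite (bigID (dom h)) /= [X in _ + X]big1 ?addr0; last by move=> x /out0.
exact: big_sub.
Qed.

Lemma form_cube_adj W U :
  form cube_adj W U = form (@sens_adj R k h) (fun y => W (val y)) (fun y => U (val y)).
Proof.
rewrite /form (@sum_domT); last first.
  move=> x xout; rewrite /mxact big1 ?mulr0 // => y _.
  by rewrite /cube_adj (negbTE xout) mul0r.
apply: eq_bigr => x _; congr (_ * _); rewrite /mxact (@sum_domT); last first.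
  by move=> y yout; rewrite /cube_adj (negbTE yout) andbF mul0r.
by apply: eq_bigr => y _; rewrite /cube_adj /sens_adj (valP x) (valP y).
Qed.

Lemma norm2_restrict W : norm2 (fun y : domT h => W (val y)) <= norm2 W.
Proof.
rewrite ler_sqrt ?sqnorm_ge0 // /sqnorm [leRHS](bigID (dom h)) /=.
rewrite (big_sub (dom h) (fun x => W x ^+ 2)) lerDl.
by apply: sumr_ge0 => i _; rewrite sqr_ge0.
Qed.

Definition extend0 w (x : bits k) : R := if insub x is Some y then w y else 0.

Lemma extend0_val w (y : domT h) : extend0 w (val y) = w y.
Proof. by rewrite /extend0 valK. Qed.

Lemma norm2_extend0 w : norm2 (extend0 w) = norm2 w.
Proof.
rewrite /norm2 /sqnorm (@sum_domT); last first.
  by move=> x xout; rewrite /extend0 insubF ?expr0n //; apply/negbTE.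
by congr Num.sqrt; apply: eq_bigr => y _; rewrite extend0_val.
Qed.

Lemma lambda_ge0 : 0 <= lambda R h.
Proof. exact: spectral_norm_ge0. Qed.

Lemma cube_form_le W U : form cube_adj W U <= lambda R h * norm2 W * norm2 U.
Proof.
rewrite form_cube_adj; apply: le_trans (form_le _ _ _) _.
rewrite -!mulrA ler_wpM2l ?lambda_ge0 //.
by apply: ler_pM; rewrite ?norm2_ge0 ?norm2_restrict.
Qed.

Lemma lambda_le c : 0 <= c ->
  (forall W U, form cube_adj W U <= c * norm2 W * norm2 U) -> lambda R h <= c.
Proof.
move=> c0 bound; apply: spectral_norm_le => // w v.
have := bound (extend0 w) (extend0 v); rewrite form_cube_adj !norm2_extend0.
have restrictK (u : domT h -> R) : (fun y : domT h => extend0 u (val y)) = u.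
  by apply: funext => y; rewrite extend0_val.
by rewrite !restrictK.
Qed.

End CubeAdjacency.

Notation blocks n m := {ffun 'I_n -> bits m}.

Section Blocks.
Variables n m : nat.
Implicit Types (X Y : blocks n m) (i : 'I_n).

Definition block_pos (k : 'I_(n * m)) : 'I_n * 'I_m :=
  enum_val (cast_ord (esym (mxvec_cast n m)) k).

Lemma block_posK i j : block_pos (mxvec_index i j) = (i, j).
Proof. by rewrite /block_pos /mxvec_index cast_ordK enum_rankK. Qed.

Lemma mxvec_index_inj i j i' j' :
  mxvec_index i j = mxvec_index i' j' :> 'I_(n * m) -> i = i' /\ j = j'.
Proof. by move=> /(congr1 block_pos); rewrite !block_posK => -[-> ->]. Qed.

Definition concat X : bits (n * m) := [ffun k => X (block_pos k).1 (block_pos k).2].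
Definition blocks_of (x : bits (n * m)) : blocks n m := [ffun i => block x i].

Lemma concat_index X i j : concat X (mxvec_index i j) = X i j.
Proof. by rewrite ffunE block_posK. Qed.

Lemma block_concat X i : block (concat X) i = X i.
Proof. by apply/ffunP => j; rewrite ffunE concat_index. Qed.

Lemma blocks_ofK : cancel blocks_of concat.
Proof.
move=> x; apply/ffunP => k; case/mxvec_indexP: k => i j.
by rewrite concat_index !ffunE.
Qed.

Lemma concatK : cancel concat blocks_of.
Proof. by move=> X; apply/ffunP => i; rewrite ffunE block_concat. Qed.

Lemma sum_concat (R : realType) (F : bits (n * m) -> R) :
  \sum_x F x = \sum_X F (concat X).
Proof.
rewrite (reindex concat) //.
by exists blocks_of => x _; [rewrite concatK | rewrite blocks_ofK].
Qed.

Lemma norm2_concat (R : realType) (W : bits (n * m) -> R) :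
  norm2 (fun X => W (concat X)) = norm2 W.
Proof. by rewrite /norm2 /sqnorm [in RHS]sum_concat. Qed.

Definition agree_off i X Y := [forall k, (k != i) ==> (X k == Y k)].

Lemma agree_offP i X Y : reflect (forall k, k != i -> X k = Y k) (agree_off i X Y).
Proof.
apply: (iffP forallP) => [H k ki | H k]; first by have := H k; rewrite ki => /eqP.
by apply/implyP => /H ->.
Qed.

Lemma diff_concat_agree i X Y : agree_off i X Y ->
  [set k | concat X k != concat Y k] = mxvec_index i @: [set j | X i j != Y i j].
Proof.
move=> /agree_offP agr; apply/setP => k; case/mxvec_indexP: k => k j.
rewrite inE !concat_index; have [->|ki] := eqVneq k i.
  apply/idP/imsetP => [ne|[j' ]]; first by exists j; rewrite ?inE.
  by rewrite inE => ne /mxvec_index_inj [_ ->].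
rewrite agr // eqxx; apply/esym/negbTE/imsetP => -[j' _] /mxvec_index_inj [ki' _].
by rewrite ki' eqxx in ki.
Qed.

Lemma hamming1_concat i X Y : X i != Y i ->
  hamming1 (concat X) (concat Y) = agree_off i X Y && hamming1 (X i) (Y i).
Proof.
move=> Xi; rewrite !hamming1E.
case agr: (agree_off i X Y) => /=.
  rewrite (diff_concat_agree agr) card_imset //.
  by move=> j1 j2 /mxvec_index_inj [_ ->].
have ffun_diff (a b : bits m) : a != b -> exists j, a j != b j.
  move=> ab; apply/existsP; apply: contraR ab; rewrite negb_exists => /forallP eq_ab.
  by apply/eqP/ffunP => j; move: (eq_ab j); rewrite negbK => /eqP.
have /existsP [k0] := negbT agr; rewrite negb_imply => /andP [k0i /ffun_diff [j0 j0d]].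
have [j1 j1d] := ffun_diff _ _ Xi.
apply/negbTE; rewrite neq_ltn; apply/orP; right.
apply: (@leq_trans #|[set mxvec_index k0 j0; mxvec_index i j1]|).
  rewrite cards2; case: eqP => // /mxvec_index_inj [k0i' _].
  by rewrite k0i' eqxx in k0i.
apply: subset_leq_card; apply/fintype.subsetP => k; rewrite !inE.
by case/ssrbool.orP => /eqP ->; rewrite !concat_index.
Qed.

Definition setblock X i (y : bits m) : blocks n m :=
  [ffun k => if k == i then y else X k].

Lemma setblock_same X i y : setblock X i y i = y.
Proof. by rewrite ffunE eqxx. Qed.

Lemma setblock_other X i y k : k != i -> setblock X i y k = X k.
Proof. by rewrite ffunE => /negbTE ->. Qed.

Lemma setblockK X i x y : setblock (setblock X i x) i y = setblock X i y.
Proof. by apply/ffunP => k; rewrite !ffunE; case: eqP. Qed.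

Lemma setblock_id X i : setblock X i (X i) = X.
Proof. by apply/ffunP => k; rewrite !ffunE; case: eqP => // ->. Qed.

Lemma agree_setblock X i y : agree_off i X (setblock X i y).
Proof. by apply/agree_offP => k ki; rewrite setblock_other. Qed.

Lemma agree_setblock_id X Y i : agree_off i X Y -> setblock X i (Y i) = Y.
Proof.
move/agree_offP => agr; apply/ffunP => k; rewrite ffunE.
by case: eqP => [->|/eqP ki] //; rewrite agr.
Qed.

Lemma sum_agree_off (R : realType) X i (F : blocks n m -> R) :
  \sum_Y (agree_off i X Y)%:R * F Y = \sum_y F (setblock X i y).
Proof.
rewrite (eq_bigr (fun Y => if agree_off i X Y then F Y else 0)); last first.
  by move=> Y _; case: agree_off; rewrite ?mul1r ?mul0r.
rewrite -big_mkcond /= (reindex_onto (fun y => setblock X i y) (fun Y => Y i)).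
  by apply: eq_bigl => y; rewrite agree_setblock setblock_same eqxx.
by move=> Y /agree_setblock_id.
Qed.

Lemma sum_frame (R : realType) i (x0 : bits m) (F : blocks n m -> R) :
  \sum_X F X = \sum_(Fr : blocks n m) (Fr i == x0)%:R * \sum_x F (setblock Fr i x).
Proof.
rewrite (partition_big (fun X : blocks n m => X i) xpredT) //=.
transitivity (\sum_x \sum_(Fr : blocks n m | Fr i == x0) F (setblock Fr i x)).
  apply: eq_bigr => x _.
  rewrite (reindex_onto (fun Fr => setblock Fr i x) (fun X => setblock X i x0)).
    apply: eq_bigl => Fr; rewrite setblock_same eqxx /= setblockK.
    apply/eqP/eqP => [<-|E]; first by rewrite setblock_same.
    by rewrite -{2}(setblock_id Fr i) E.
  by move=> X /eqP Xi; rewrite setblockK -Xi setblock_id.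
rewrite exchange_big /= big_mkcond /=; apply: eq_bigr => Fr _.
by case: eqP; rewrite ?mul1r ?mul0r.
Qed.

End Blocks.

Section CompositionInBlocks.
Variables (R : realType) (n m : nat) (f : pfun n) (g : pfun m).
Implicit Types (X Y : blocks n m) (z : bits n).

Definition over z X := [forall i, g (X i) == Some (z i)].
Definition blocks_defined X := [forall i, g (X i) != None].
Definition gvals X : bits n := [ffun i => odflt false (g (X i))].

Lemma overE z X : over z X = blocks_defined X && (z == gvals X).
Proof.
apply/idP/idP.
  move/forallP => Xz; apply/andP; split.
    by apply/forallP => i; rewrite (eqP (Xz i)).
  by apply/eqP/ffunP => i; rewrite ffunE (eqP (Xz i)).
case/andP => /forallP def /eqP ->; apply/forallP => i; rewrite ffunE.
by move: (def i); case: (g (X i)).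
Qed.

Lemma over_block_neq z z' X Y i : over z X -> over z' Y -> z i != z' i -> X i != Y i.
Proof.
move=> /forallP /(_ i) /eqP Xz /forallP /(_ i) /eqP Yz'.
by apply: contraNneq => XY; move: Xz; rewrite XY Yz' => -[->].
Qed.

Lemma compose_concat X :
  compose f g (concat X) = if blocks_defined X then f (gvals X) else None.
Proof.
rewrite /compose.
have -> : [forall i, [ffun i0 => g (block (concat X) i0)] i != None] = blocks_defined X.
  by apply: eq_forallb => i; rewrite ffunE block_concat.
by case: (blocks_defined X) => //; congr f; apply/ffunP => i; rewrite !ffunE block_concat.
Qed.

(* Adjacency in G_{f o g}: adjacent inputs whose g-value vectors are adjacent
   in G_f (their g-values then differ in the single block where they differ). *)
Lemma cube_adj_compose X Y : blocks_defined X -> blocks_defined Y ->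
  cube_adj R (compose f g) (concat X) (concat Y) =
  cube_adj R f (gvals X) (gvals Y) * (hamming1 (concat X) (concat Y))%:R.
Proof.
move=> defX defY; rewrite /cube_adj /dom !compose_concat defX defY.
case adj: (hamming1 (concat X) (concat Y)); last by rewrite !andbF /= mulr0.
rewrite mulr1 /=; case fne: (f (gvals X) != f (gvals Y)); last by rewrite !andbF.
rewrite !andbT; suff -> : hamming1 (gvals X) (gvals Y) by rewrite andbT.
have [i [XYi agr]] : exists i, X i != Y i /\ agree_off i X Y.
  have [k [kd _]] := hamming1P adj; case/mxvec_indexP: k kd => i j.
  rewrite !concat_index => XYij.
  have XYi : X i != Y i by apply: contraNneq XYij => ->.
  by exists i; split => //; move: adj; rewrite (hamming1_concat XYi) => /andP [].
have gne : gvals X != gvals Y by apply: contraNneq fne => ->.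
move/agree_offP: agr => agr; rewrite hamming1E; apply/eqP.
have -> : [set k | gvals X k != gvals Y k] = [set i]; last by rewrite cards1.
apply/setP => k; rewrite !inE.
have [->|ki] := eqVneq k i; last by rewrite !ffunE agr // eqxx.
apply: contraNneq gne => gi; apply/eqP/ffunP => k'.
by have [->|k'i] := eqVneq k' i; rewrite // !ffunE agr.
Qed.

Lemma cube_adj_compose_fibres X Y :
  cube_adj R (compose f g) (concat X) (concat Y) =
  \sum_z \sum_z' (over z X)%:R * (over z' Y)%:R * cube_adj R f z z' *
     (hamming1 (concat X) (concat Y))%:R.
Proof.
case defX: (blocks_defined X); last first.
  rewrite /cube_adj /dom compose_concat defX /= big1 // => z _.
  by rewrite big1 // => z' _; rewrite overE defX /= !mul0r.
case defY: (blocks_defined Y); last first.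
  rewrite /cube_adj /dom !compose_concat defY /= andbF /= big1 // => z _.
  by rewrite big1 // => z' _; rewrite (overE z' Y) defY /= mulr0 !mul0r.
rewrite cube_adj_compose //.
under eq_bigr => z _ do under eq_bigr => z' _ do
  rewrite overE defX overE defY /= -!mulrA.
transitivity (\sum_z (z == gvals X)%:R * \sum_z' (z' == gvals Y)%:R *
    (cube_adj R f z z' * (hamming1 (concat X) (concat Y))%:R)).
  by rewrite !sum_indicator.
by apply: eq_bigr => z _; rewrite big_distrr.
Qed.

End CompositionInBlocks.

Section UpperBound.
Variables (R : realType) (n m : nat) (f : pfun n) (g : pfun m).
Local Notation over := (over g).
Implicit Types (X Y Fr : blocks n m) (w : blocks n m -> R) (z : bits n).

Definition fibre_norm w z : R := norm2 (fun X => (over z X)%:R * w X).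

Definition fibre_form w' w z z' : R :=
  \sum_X \sum_Y (over z X)%:R * (over z' Y)%:R *
    (hamming1 (concat X) (concat Y))%:R * (w' X * w Y).

Lemma form_compose_fibres (W' W : bits (n * m) -> R) :
  form (cube_adj R (compose f g)) W' W =
  \sum_z \sum_z' cube_adj R f z z' *
    fibre_form (fun X => W' (concat X)) (fun X => W (concat X)) z z'.
Proof.
have expand X Y : W' (concat X) * (cube_adj R (compose f g) (concat X) (concat Y) *
    W (concat Y)) = \sum_z \sum_z' cube_adj R f z z' * ((over z X)%:R *
    (over z' Y)%:R * (hamming1 (concat X) (concat Y))%:R * (W' (concat X) * W (concat Y))).
  rewrite cube_adj_compose_fibres mulr_suml mulr_sumr; apply: eq_bigr => z _.
  by rewrite mulr_suml mulr_sumr; apply: eq_bigr => z' _; ring.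
rewrite /form /mxact sum_concat.
under eq_bigr => X _ do rewrite sum_concat mulr_sumr.
under eq_bigr => X _ do under eq_bigr => Y _ do rewrite expand.
rewrite exchange_big_pairs; apply: eq_bigr => z _; apply: eq_bigr => z' _.
by rewrite /fibre_form mulr_sumr; apply: eq_bigr => X _; rewrite mulr_sumr.
Qed.

(* Every input lies over at most one z, so the fibre norms are orthogonal
   pieces of w. *)
Lemma norm2_fibre_norm w : norm2 (fibre_norm w) <= norm2 w.
Proof.
rewrite ler_sqrt ?sqnorm_ge0 // /sqnorm.
under eq_bigr => z _ do rewrite /fibre_norm sqr_sqrtr ?sqnorm_ge0 // /sqnorm.
rewrite exchange_big /=; apply: ler_sum => X _.
rewrite (eq_bigr (fun z => (z == gvals g X)%:R * ((blocks_defined g X)%:R * w X ^+ 2)));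
  last by move=> z _; rewrite overE exprMn; case: blocks_defined; case: eqP => _;
    rewrite /= ?mulr0n ?mulr1n; ring.
rewrite sum_indicator; case: blocks_defined; rewrite /= ?mul1r ?mul0r ?sqr_ge0 //.
Qed.

(* Inputs X over z and Y over z' are
   adjacent only if they share a frame (all blocks but the i-th), so the form
   decomposes into copies of the form of A_g, one per frame. *)
Section OneEdge.
Variables (z z' : bits n) (i : 'I_n).
Hypothesis zi : z i != z' i.
Hypothesis zk : forall k, k != i -> z' k = z k.

Definition frame_over (zz : bits n) Fr :=
  [forall k, (k != i) ==> (g (Fr k) == Some (zz k))].

Lemma over_setblock zz Fr x :
  over zz (setblock Fr i x) = frame_over zz Fr && (g x == Some (zz i)).
Proof.
apply/forallP/andP => [Xz|[/forallP Frz gx] k].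
  split; last by have := Xz i; rewrite setblock_same.
  by apply/forallP => k; apply/implyP => ki; have := Xz k; rewrite setblock_other.
have [->|ki] := eqVneq k i; first by rewrite setblock_same.
by rewrite setblock_other //; have := Frz k; rewrite ki.
Qed.

Lemma frame_over_z' Fr : frame_over z' Fr = frame_over z Fr.
Proof. by apply: eq_forallb => k; case: eqVneq => //= ki; rewrite zk. Qed.

(* frame_weight selects the frames over z, one representative (block i set
   to zero_block) per frame. *)
Definition zero_block : bits m := [ffun => false].
Definition frame_weight Fr : R := ((Fr i == zero_block) && frame_over z Fr)%:R.

Definition slice (b : bool) (v : blocks n m -> R) Fr (x : bits m) : R :=
  (g x == Some b)%:R * `|v (setblock Fr i x)|.

Definition edge_term w' w X Y : R :=
  (over z X)%:R * (over z' Y)%:R * (hamming1 (X i) (Y i))%:R * (`|w' X| * `|w Y|).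

Lemma fibre_form_le_agree w' w :
  fibre_form w' w z z' <= \sum_X \sum_Y (agree_off i X Y)%:R * edge_term w' w X Y.
Proof.
apply: ler_sum => X _; apply: ler_sum => Y _; rewrite /edge_term.
case Xz: (over z X); last by rewrite !mul0r mulr0.
case Yz': (over z' Y); last by rewrite !mulr0 !mul0r mulr0.
rewrite (hamming1_concat (over_block_neq Xz Yz' zi)).
case: (agree_off i X Y) => /=; last by rewrite mulr0 !mul0r.
rewrite !mul1r; case: (hamming1 (X i) (Y i)); last by rewrite !mul0r.
by rewrite !mul1r -normrM ler_norm.
Qed.

Lemma agree_sum_slices w' w :
  \sum_X \sum_Y (agree_off i X Y)%:R * edge_term w' w X Y =
  \sum_Fr frame_weight Fr * form (cube_adj R g) (slice (z i) w' Fr) (slice (z' i) w Fr).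
Proof.
under eq_bigr => X _ do rewrite sum_agree_off.
rewrite (sum_frame i zero_block (fun X => \sum_y edge_term w' w X (setblock X i y))).
apply: eq_bigr => Fr _; rewrite /form /mxact !big_distrr; apply: eq_bigr => x _.
rewrite big_distrr /= mulrA big_distrr; apply: eq_bigr => y _.
rewrite /edge_term /frame_weight /slice setblockK !setblock_same !over_setblock.
rewrite frame_over_z'.
case: (Fr i == zero_block); last by rewrite /= ?mulr0n ?mulr1n; ring.
case: (frame_over z Fr); last by rewrite /= ?mulr0n ?mulr1n; ring.
case gx: (g x == Some (z i)); last by rewrite /= ?mulr0n ?mulr1n; ring.
case gy: (g y == Some (z' i)); last by rewrite /= ?mulr0n ?mulr1n; ring.
rewrite /cube_adj /dom (eqP gx) (eqP gy) /=.
have -> : (Some (z i) != Some (z' i)) = true by apply: contraNneq zi => -[->].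
by rewrite andbT; case: (hamming1 x y) => /=; rewrite ?mulr0n ?mulr1n; ring.
Qed.

Lemma norm2_slices zz v : (forall Fr, frame_over zz Fr = frame_over z Fr) ->
  norm2 (fun Fr => frame_weight Fr * norm2 (slice (zz i) v Fr)) = fibre_norm v zz.
Proof.
move=> frame_zz; rewrite /fibre_norm /norm2; congr Num.sqrt.
rewrite /sqnorm (sum_frame i zero_block (fun X => ((over zz X)%:R * v X) ^+ 2)).
apply: eq_bigr => Fr _.
rewrite exprMn sqr_sqrtr ?sqnorm_ge0 // expr2 natr_bool_idem /sqnorm !big_distrr.
apply: eq_bigr => x _; rewrite over_setblock frame_zz /frame_weight /slice.
case: (Fr i == zero_block); case: (frame_over z Fr); case: (g x == Some (zz i));
  by rewrite /= ?mulr0n ?mulr1n ?mul1r ?real_normK ?num_real //; ring.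
Qed.

Lemma fibre_form_le w' w :
  fibre_form w' w z z' <= lambda R g * fibre_norm w' z * fibre_norm w z'.
Proof.
apply: le_trans (fibre_form_le_agree w' w) _; rewrite agree_sum_slices.
set u := slice (z i) w'; set v := slice (z' i) w.
apply: le_trans (_ : _ <= \sum_Fr frame_weight Fr *
    (lambda R g * norm2 (u Fr) * norm2 (v Fr))) _.
  by apply: ler_sum => Fr _; apply: ler_wpM2l; [apply: ler0n | apply: cube_form_le].
rewrite -(norm2_slices w') // -(norm2_slices w frame_over_z').
rewrite (eq_bigr (fun Fr => lambda R g *
    ((frame_weight Fr * norm2 (u Fr)) * (frame_weight Fr * norm2 (v Fr))))); last first.
  move=> Fr _; have fw2 : frame_weight Fr * frame_weight Fr = frame_weight Fr.
    exact: natr_bool_idem.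
  by rewrite -{1}fw2; ring.
by rewrite -mulr_sumr -mulrA ler_wpM2l ?lambda_ge0 ?cauchy_schwarz.
Qed.

End OneEdge.

Lemma edge_fibre_form_le w' w z z' :
  cube_adj R f z z' * fibre_form w' w z z' <=
  cube_adj R f z z' * (lambda R g * fibre_norm w' z * fibre_norm w z').
Proof.
have [->|[-> /hamming1P [i [zi zk]]]] := cube_adjP R f z z'; first by rewrite !mul0r.
by rewrite !mul1r (fibre_form_le zi zk).
Qed.

Lemma lambda_compose_le : lambda R (compose f g) <= lambda R f * lambda R g.
Proof.
apply: lambda_le; first by rewrite mulr_ge0 ?lambda_ge0.
move=> W' W; rewrite form_compose_fibres -(norm2_concat W') -(norm2_concat W).
set w' := fun X => W' (concat X); set w := fun X => W (concat X).
apply: le_trans (_ : _ <= lambda R g *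
    form (cube_adj R f) (fibre_norm w') (fibre_norm w)) _.
  rewrite /form /mxact mulr_sumr; apply: ler_sum => z _; rewrite !mulr_sumr.
  apply: ler_sum => z' _; apply: le_trans (edge_fibre_form_le w' w z z') _.
  by rewrite mulrCA -mulrA.
apply: le_trans (ler_wpM2l (lambda_ge0 R g) (cube_form_le f _ _)) _.
have -> : lambda R g * (lambda R f * norm2 (fibre_norm w') * norm2 (fibre_norm w)) =
  (lambda R f * lambda R g) * (norm2 (fibre_norm w') * norm2 (fibre_norm w)) by ring.
rewrite -[leRHS]mulrA ler_wpM2l ?mulr_ge0 ?lambda_ge0 //.
by apply: ler_pM; rewrite ?norm2_ge0 ?norm2_fibre_norm.
Qed.

End UpperBound.

Lemma cross_le_sqrt (R : rcfType) (a b p q : R) :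
  0 <= a -> 0 <= b -> 0 <= p -> 0 <= q ->
  a * q + p * b <= Num.sqrt ((a ^+ 2 + b ^+ 2) * (p ^+ 2 + q ^+ 2)).
Proof.
move=> a0 b0 p0 q0; rewrite -[a * q + p * b]ger0_norm ?addr_ge0 ?mulr_ge0 //.
rewrite -sqrtr_sqr ler_sqrt ?mulr_ge0 ?addr_ge0 ?sqr_ge0 //.
have : 0 <= (a * p - b * q) ^+ 2 by apply: sqr_ge0.
lra.
Qed.

(* G_g is bipartite, with sides g^-1(false) and g^-1(true); hence any bound
   on the forms <u, A_g v> with u, v unit vectors supported on the two sides
   bounds lambda(g). *)
Section Bipartite.
Variables (R : realType) (m : nat) (g : pfun m).
Implicit Types (u v W U : bits m -> R).

Definition on_side (b : bool) u := forall x, g x != Some b -> u x = 0.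

Definition side_part (b : bool) W x : R := (g x == Some b)%:R * W x.

Lemma side_part_on b W : on_side b (side_part b W).
Proof. by move=> x /negbTE gx; rewrite /side_part gx mul0r. Qed.

Lemma sqnorm_side_parts W :
  sqnorm (side_part false W) + sqnorm (side_part true W) <= sqnorm W.
Proof.
rewrite /sqnorm -big_split; apply: ler_sum => x _; rewrite /side_part.
case: (g x) => [[]|] /=; rewrite ?mulr0n ?mulr1n ?mul0r ?mul1r ?expr0n ?addr0 ?add0r //.
by rewrite sqr_ge0.
Qed.

Lemma form_side_parts W U :
  form (cube_adj R g) W U =
  form (cube_adj R g) (side_part false W) (side_part true U) +
  form (cube_adj R g) (side_part false U) (side_part true W).
Proof.
rewrite [form _ (side_part false U) _]form_sym; last exact: cube_adj_sym.
rewrite /form /mxact -big_split; apply: eq_bigr => x _.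
rewrite !mulr_sumr -big_split; apply: eq_bigr => y _.
rewrite /side_part /cube_adj /dom.
by case: (g x) => [[]|]; case: (g y) => [[]|]; case: (hamming1 x y);
  rewrite /= ?mulr0n ?mulr1n; ring.
Qed.

Section SideBound.
Variable c : R.
Hypothesis c0 : 0 <= c.
Hypothesis unit_bound : forall u v, on_side false u -> on_side true v ->
  sqnorm u = 1 -> sqnorm v = 1 -> form (cube_adj R g) u v <= c.

Lemma form_sides_le u v : on_side false u -> on_side true v ->
  form (cube_adj R g) u v <= c * norm2 u * norm2 v.
Proof.
move=> uside vside.
have [u0|nu] := eqVneq (norm2 u) 0.
  rewrite u0 mulr0 mul0r /form big1 // => x _.
  by rewrite (norm2_eq0 u0) mul0r.
have [v0|nv] := eqVneq (norm2 v) 0.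
  rewrite v0 mulr0 /form big1 // => x _.
  by rewrite /mxact big1 ?mulr0 // => y _; rewrite (norm2_eq0 v0) mulr0.
have scaled_side b w : on_side b w -> on_side b (fun x => (norm2 w)^-1 * w x).
  by move=> wside x /wside ->; rewrite mulr0.
have -> : form (cube_adj R g) u v = (norm2 u * norm2 v) *
    form (cube_adj R g) (fun x => (norm2 u)^-1 * u x) (fun y => (norm2 v)^-1 * v y).
  by rewrite formZ; field; rewrite nu nv.
rewrite [c * _ * _](_ : _ = norm2 u * norm2 v * c); last by ring.
rewrite ler_wpM2l ?mulr_ge0 ?norm2_ge0 //.
exact: unit_bound (scaled_side _ _ uside) (scaled_side _ _ vside)
  (sqnorm_normalize nu) (sqnorm_normalize nv).
Qed.

Lemma lambda_le_bipartite : lambda R g <= c.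
Proof.
apply: lambda_le => // W U; rewrite form_side_parts.
apply: le_trans (lerD (form_sides_le (@side_part_on false W) (@side_part_on true U))
                      (form_sides_le (@side_part_on false U) (@side_part_on true W))) _.
rewrite -!mulrA -mulrDr ler_wpM2l //.
have sqr_norm2 w : norm2 w ^+ 2 = sqnorm w by rewrite sqr_sqrtr ?sqnorm_ge0.
apply: le_trans (cross_le_sqrt _ _ _ _) _; rewrite ?norm2_ge0 //.
rewrite !sqr_norm2 /norm2 -sqrtrM ?sqnorm_ge0 // ler_sqrt ?mulr_ge0 ?sqnorm_ge0 //.
by apply: ler_pM; rewrite ?addr_ge0 ?sqnorm_ge0 ?sqnorm_side_parts // addrC.
Qed.

End SideBound.
End Bipartite.

(* Each
   vector a on {0,1}^n lifts to the vector sum_z a_z (tensor_i phi_(z_i)) on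
   {0,1}^(n*m), with phi_false = u and phi_true = v; the lift is an isometry
   and multiplies the form of A_f by <u, A_g v>. *)
Section LowerBound.
Variables (R : realType) (n m : nat) (f : pfun n) (g : pfun m) (u v : bits m -> R).
Hypotheses (uside : on_side g false u) (vside : on_side g true v).
Hypotheses (u1 : sqnorm u = 1) (v1 : sqnorm v = 1).
Local Notation over := (over g).
Implicit Types (X Y : blocks n m) (z : bits n).

Definition side_vec (b : bool) : bits m -> R := if b then v else u.

Lemma side_vec_on b x : g x != Some b -> side_vec b x = 0.
Proof. by case: b => /=; [apply: vside | apply: uside]. Qed.

Lemma sqnorm_side_vec b : sqnorm (side_vec b) = 1.
Proof. by case: b. Qed.

Definition tensor z X : R := \prod_i side_vec (z i) (X i).

Lemma tensor_out z X : ~~ over z X -> tensor z X = 0.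
Proof.
rewrite /over negb_forall => /existsP [i Xi].
by rewrite /tensor (bigD1 i) //= side_vec_on // mul0r.
Qed.

Lemma tensor_orth z z' X : z != z' -> tensor z X * tensor z' X = 0.
Proof.
move=> zz'; case Xz: (over z X); last by rewrite tensor_out ?Xz // mul0r.
case Xz': (over z' X); last by rewrite (tensor_out (z := z')) ?Xz' // mulr0.
move: Xz Xz'; rewrite !overE => /andP [_ /eqP zX] /andP [_ /eqP z'X].
by rewrite zX z'X eqxx in zz'.
Qed.

Lemma sqnorm_tensor z : sqnorm (tensor z) = 1.
Proof.
rewrite /sqnorm /tensor.
under eq_bigr => X _ do rewrite -prodrXl.
rewrite -(bigA_distr_bigA (fun i y => side_vec (z i) y ^+ 2)) /=.
by rewrite big1 // => i _; apply: sqnorm_side_vec.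
Qed.

Definition lift (a : bits n -> R) (x : bits (n * m)) : R :=
  \sum_z a z * tensor z (blocks_of x).

Lemma sqnorm_lift a : sqnorm (lift a) = sqnorm a.
Proof.
rewrite /sqnorm sum_concat.
have orth X z z' : z != z' -> (a z * tensor z X) * (a z' * tensor z' X) = 0.
  by move=> zz'; rewrite mulrACA tensor_orth // mulr0.
under eq_bigr => X _ do rewrite /lift concatK (sqr_sum_orthogonal (orth X)).
rewrite exchange_big /=; apply: eq_bigr => z _.
under eq_bigr => X _ do rewrite exprMn.
by rewrite -mulr_sumr -/(sqnorm (tensor z)) sqnorm_tensor mulr1.
Qed.

Lemma tensor_cube_adj_compose z z' X Y :
  tensor z X * cube_adj R (compose f g) (concat X) (concat Y) * tensor z' Y =
  tensor z X * (cube_adj R f z z' * (hamming1 (concat X) (concat Y))%:R) * tensor z' Y.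
Proof.
case Xz: (over z X); last by rewrite tensor_out ?Xz // !mul0r.
case Yz': (over z' Y); last by rewrite (tensor_out (z := z')) ?Yz' // !mulr0.
move: Xz Yz'; rewrite !overE => /andP [defX /eqP ->] /andP [defY /eqP ->].
by rewrite cube_adj_compose.
Qed.

(* Between the two sides, adjacency in G_g is just Hamming adjacency. *)
Lemma hamming1_sides x y : u x * (hamming1 x y)%:R * v y = u x * (cube_adj R g x y * v y).
Proof.
have [gx|gx] := eqVneq (g x) (Some false); last by rewrite uside // !mul0r.
have [gy|gy] := eqVneq (g y) (Some true); last by rewrite vside // !mulr0.
rewrite /cube_adj /dom gx gy /= andbT.
by case: (hamming1 x y); rewrite /= ?mulr0n ?mulr1n; ring.
Qed.

Section OneEdge.
Variables (z z' : bits n) (i : 'I_n).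
Hypothesis zi : z i != z' i.
Hypothesis zk : forall k, k != i -> z' k = z k.

Lemma tensor_hamming1_agree X Y :
  tensor z X * (hamming1 (concat X) (concat Y))%:R * tensor z' Y =
  (agree_off i X Y)%:R * (tensor z X * (hamming1 (X i) (Y i))%:R * tensor z' Y).
Proof.
case Xz: (over z X); last by rewrite tensor_out ?Xz // !mul0r mulr0.
case Yz': (over z' Y); last by rewrite (tensor_out (z := z')) ?Yz' // !mulr0.
rewrite (hamming1_concat (over_block_neq Xz Yz' zi)).
by case: (agree_off i X Y); case: (hamming1 (X i) (Y i)); rewrite /= ?mulr0n ?mulr1n; ring.
Qed.

(* Summing out the blocks other than i, each contributing |phi|^2 = 1. *)
Lemma sum_tensor_hamming1 :
  \sum_X \sum_Y tensor z X * (hamming1 (concat X) (concat Y))%:R * tensor z' Y =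
  \sum_y \sum_x side_vec (z i) x * (hamming1 x y)%:R * side_vec (z' i) y.
Proof.
under eq_bigr => X _ do under eq_bigr => Y _ do rewrite tensor_hamming1_agree.
under eq_bigr => X _ do rewrite sum_agree_off.
rewrite exchange_big /=; apply: eq_bigr => y _.
pose G k x := if k == i then side_vec (z i) x * (hamming1 x y)%:R * side_vec (z' i) y
              else side_vec (z k) x ^+ 2.
have factor X : tensor z X * (hamming1 (X i) (setblock X i y i))%:R *
    tensor z' (setblock X i y) = \prod_k G k (X k).
  rewrite setblock_same /tensor (bigD1 i) //= [in RHS](bigD1 i) //=.
  rewrite [X in _ * _ * X](bigD1 i) //= setblock_same /G eqxx.
  have -> : \prod_(k | k != i) side_vec (z' k) (setblock X i y k) =
            \prod_(k | k != i) side_vec (z k) (X k).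
    by apply: eq_bigr => k ki; rewrite zk // setblock_other.
  have -> : \prod_(k | k != i) G k (X k) =
            \prod_(k | k != i) side_vec (z k) (X k) * \prod_(k | k != i) side_vec (z k) (X k).
    by rewrite -big_split /=; apply: eq_bigr => k ki; rewrite /G (negbTE ki) expr2.
  ring.
under eq_bigr => X _ do rewrite factor.
rewrite -(bigA_distr_bigA G) /= (bigD1 i) //= [X in _ * X]big1 ?mulr1.
  by apply: eq_bigr => x _; rewrite /G eqxx.
by move=> k ki; rewrite /G (negbTE ki); apply: sqnorm_side_vec.
Qed.

Lemma sum_tensor_edge :
  \sum_X \sum_Y tensor z X * (hamming1 (concat X) (concat Y))%:R * tensor z' Y =
  form (cube_adj R g) u v.
Proof.
rewrite sum_tensor_hamming1 /form /mxact.
under [RHS]eq_bigr => x _ do rewrite mulr_sumr.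
move: zi; case: (z i); case: (z' i) => //= _.
  apply: eq_bigr => y _; apply: eq_bigr => x _.
  by rewrite -hamming1_sides hamming1_sym; ring.
by rewrite exchange_big /=; apply: eq_bigr => x _; apply: eq_bigr => y _; rewrite -hamming1_sides.
Qed.

End OneEdge.

Lemma edge_tensor_form z z' :
  cube_adj R f z z' *
    (\sum_X \sum_Y tensor z X * (hamming1 (concat X) (concat Y))%:R * tensor z' Y) =
  cube_adj R f z z' * form (cube_adj R g) u v.
Proof.
have [->|[-> /hamming1P [i [zi zk]]]] := cube_adjP R f z z'; first by rewrite !mul0r.
by rewrite (sum_tensor_edge zi zk).
Qed.

Lemma form_lift a' a :
  form (cube_adj R (compose f g)) (lift a') (lift a) =
  form (cube_adj R g) u v * form (cube_adj R f) a' a.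
Proof.
have expand X Y : lift a' (concat X) *
    (cube_adj R (compose f g) (concat X) (concat Y) * lift a (concat Y)) =
    \sum_z \sum_z' a' z * a z' * (cube_adj R f z z' *
      (tensor z X * (hamming1 (concat X) (concat Y))%:R * tensor z' Y)).
  rewrite /lift !concatK mulr_suml; apply: eq_bigr => z _.
  rewrite mulr_sumr mulr_sumr; apply: eq_bigr => z' _.
  transitivity (a' z * a z' * (tensor z X *
    cube_adj R (compose f g) (concat X) (concat Y) * tensor z' Y)); first by ring.
  by rewrite tensor_cube_adj_compose; ring.
rewrite /form /mxact sum_concat.
under eq_bigr => X _ do rewrite sum_concat mulr_sumr.
under eq_bigr => X _ do under eq_bigr => Y _ do rewrite expand.
rewrite exchange_big_pairs mulr_sumr; apply: eq_bigr => z _.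
rewrite mulr_sumr mulr_sumr; apply: eq_bigr => z' _.
under eq_bigr => X _ do rewrite -mulr_sumr -mulr_sumr.
by rewrite -mulr_sumr -mulr_sumr edge_tensor_form /form /mxact; ring.
Qed.

End LowerBound.

(* lambda(f) lambda(g) <= lambda(f o g): lambda(g) is approached by forms
   <u, A_g v> (bipartiteness), and each such value times lambda(f) is a
   value of the form of A_{f o g} on lifted unit vectors. *)
Lemma lambda_compose_ge (R : realType) (n m : nat) (f : pfun n) (g : pfun m) :
  lambda R f * lambda R g <= lambda R (compose f g).
Proof.
have [f0|fpos] := eqVneq (lambda R f) 0; first by rewrite f0 mul0r lambda_ge0.
have lf : 0 < lambda R f by rewrite lt_def fpos lambda_ge0.
rewrite mulrC -ler_pdivlMr //; apply: lambda_le_bipartite.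
  by rewrite divr_ge0 ?lambda_ge0.
move=> u v uside vside u1 v1; rewrite ler_pdivlMr //.
set s := form (cube_adj R g) u v.
have [s0|spos] := lerP s 0.
  by apply: le_trans (lambda_ge0 R _); rewrite mulr_le0_ge0 // ltW.
rewrite mulrC -ler_pdivlMr //; apply: lambda_le; first by rewrite divr_ge0 ?lambda_ge0 // ltW.
move=> a' a; rewrite [_ / s * _ * _](_ : _ =
  (lambda R (compose f g) * norm2 a' * norm2 a) / s); last by ring.
rewrite ler_pdivlMr // mulrC.
have := cube_form_le (compose f g) (lift u v a') (lift u v a).
by rewrite (form_lift f uside vside u1 v1) /norm2 !(sqnorm_lift uside vside u1 v1).
Qed.

Unset Implicit Arguments.
Theorem theoremA2 (R : realType) (n m : nat) (f : pfun n) (g : pfun m) :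
  lambda R (compose f g) = lambda R f * lambda R g.
Proof. by apply/eqP; rewrite eq_le lambda_compose_le lambda_compose_ge. Qed.
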